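(* Let $d\ge1$, $G\in\mathrm{GL}_{1+d}(\mathbb{R})$, and let $g(\xi)=\boldsymbol{\pi}({}^tG\,\sigma(\xi))$ for $\xi\in\mathbb{R}^d$, $\|\xi\|<1$. Then in a neighbourhood of $\xi=0$, the differential $dg(\xi)$ (equivalently the mixed Hessian $\partial_{\tilde x}\partial_\xi\phi$ of the phase $\phi(\tilde x,\xi)=\langle\tilde x,g(\xi)\rangle_d+\langle\gamma,\sigma(\xi)\rangle$, $\gamma\in\mathbb{R}^{1+d}$) is non-degenerate if and only if the hyperplanes $P_0=\{0\}\times\mathbb{R}^d$ and $GP_0$ are not mutually perpendicular, i.e. if and only if $\langle e_0,G^{-1}e_0\rangle\neq 0$.
   Context: $\mathbb{R}^{1+d}$ has coordinates $(x_0,\dots,x_d)$, canonical basis $e_0,\dots,e_d$, Euclidean scalar product $\langle\cdot,\cdot\rangle$; $\langle\cdot,\cdot\rangle_d$ is the Euclidean scalar product on $\mathbb{R}^d$. $\sigma(\xi)=(\sqrt{1-\|\xi\|^2},\xi)$ for $\|\xi\|<1$. $\boldsymbol{\pi}:\mathbb{R}^{1+d}\to\mathbb{R}^d$ is the linear projection $(\xi_0,\xi_1,\dots,\xi_d)\mapsto(\xi_1,\dots,\xi_d)$. ${}^tG$ is the transpose of $G$. *)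

From HB Require Import structures.
From mathcomp Require Import all_boot all_order all_algebra.
From mathcomp Require Import all_classical all_reals all_analysis.
Set Implicit Arguments. Unset Strict Implicit. Unset Printing Implicit Defensive.
Import Order.TTheory GRing.Theory Num.Theory.
Import numFieldNormedType.Exports.
Local Open Scope ring_scope.

(* Vectors of R^{1+d} are row vectors 'rV[R]_(1 + d); coordinate 0 is x_0. *)

(* Squared Euclidean norm on R^d (the library norm on 'rV is the max norm). *)
Definition sqnorm (R : realType) (d : nat) (xi : 'rV[R]_d) : R :=
  \sum_(i < d) xi ord0 i ^+ 2.

Definition sigma (R : realType) (d : nat) (xi : 'rV[R]_d) : 'rV[R]_(1 + d) :=
  row_mx (Num.sqrt (1 - sqnorm xi))%:M xi.

Definition proj (R : realType) (d : nat) (x : 'rV[R]_(1 + d)) : 'rV[R]_d :=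
  rsubmx x.

(* g(xi) = pi ( tG sigma(xi) ); for a row vector v, (tG v^T)^T = v *m G *)
Definition gmap (R : realType) (d : nat) (G : 'M[R]_(1 + d)) (xi : 'rV[R]_d)
  : 'rV[R]_d := proj (sigma xi *m G).

From HB Require Import structures.
From mathcomp Require Import all_boot all_order all_algebra.
From mathcomp Require Import all_classical all_reals all_analysis.
From mathcomp Require Import ring.
Import Order.TTheory GRing.Theory Num.Theory.
Import numFieldNormedType.Exports.
Local Open Scope ring_scope.

(* Write G in blocks [[a, c], [b, D]].  Then g(xi) = sigma0(xi) c + xi D with
   sigma0(xi) = sqrt(1 - |xi|^2), so the Jacobian of g at xi is the rank-one
   perturbation D - sigma0(xi)^-1 xi^T c of D.  At xi = 0 it is D, and near 0
   the matrix determinant lemma gives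
   det J(xi) = det D (1 - c D^-1 xi^T / sigma0(xi)),
   whose second factor tends to 1.  Finally det D is the (0,0) cofactor of G, so
   (G^-1)_00 = det D / det G. *)

Section is_diff_normed.
Context {R : numFieldType} {V W : normedModType R}.

Lemma is_diff_sum {k} (F dF : 'I_k -> V -> W) x :
  (forall i, is_diff x (F i) (dF i)) -> is_diff x (\sum_i F i) (\sum_i dF i).
Proof.
move=> FdF; elim/big_ind2: _ => [|f df g dg ? ?|i _]; last exact: FdF.
  exact: is_diff_cst.
exact: is_diffD.
Qed.

Lemma is_diffZl (k dk : V -> R) (w : W) x :
  is_diff x k dk -> is_diff x (fun z => k z *: w) (fun z => dk z *: w).
Proof.
move=> kdk; apply: DiffDef; first exact: differentiableZl.
by rewrite diffZl // diff_val.
Qed.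

End is_diff_normed.

Lemma is_diff_near_gt {R : realFieldType} {V : normedModType R}
    {f df : V -> R} {x y} :
  is_diff x f df -> y < f x -> \forall z \near x, y < f z.
Proof. by move=> f_diff; apply: cvgr_gt; exact: differentiable_continuous. Qed.

Section is_diff_matrix.
Context {R : numFieldType}.

Lemma is_diff_coord {m n} (i : 'I_m) (j : 'I_n) (M : 'M[R]_(m, n)) :
  is_diff M (fun N : 'M[R]_(m, n) => N i j) (fun N => N i j).
Proof.
have coord_lin : linear (fun N : 'M[R]_(m, n) => N i j).
  by move=> a u v; rewrite !mxE.
pose f : {linear 'M[R]_(m, n) -> R} :=
  HB.pack (fun N : 'M[R]_(m, n) => N i j)
          (GRing.isLinear.Build _ _ _ _ _ coord_lin).
apply: DiffDef; first exact: differentiable_coord.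
by rewrite (diff_lin (f := f)) //; exact: coord_continuous.
Qed.

Lemma is_diff_mulmxr {m p} (M : 'M[R]_(m, p)) (x : 'rV[R]_m) :
  is_diff x (fun h : 'rV[R]_m => h *m M) (fun h => h *m M).
Proof.
have -> : (fun h : 'rV[R]_m => h *m M) =
          \sum_i (fun h : 'rV[R]_m => h 0 i *: row i M).
  by apply/funext => h; rewrite mulmx_sum_row fct_sumE.
by apply: is_diff_sum => i; apply: is_diffZl; exact: is_diff_coord.
Qed.

End is_diff_matrix.

Section sigma0.
Context {R : realType} {d : nat}.

Definition sigma0 (xi : 'rV[R]_d) : R := Num.sqrt (1 - sqnorm xi).

Lemma sqnorm0 : sqnorm (0 : 'rV[R]_d) = 0.
Proof. by rewrite /sqnorm big1 // => i _; rewrite mxE expr0n. Qed.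

Lemma sigma0_0 : sigma0 0 = 1.
Proof. by rewrite /sigma0 sqnorm0 subr0 sqrtr1. Qed.

Lemma is_diff_sqrt {y : R} : 0 < y ->
  is_diff y (@Num.sqrt R) (fun h => h / (2 * Num.sqrt y)).
Proof.
move=> y_gt0; have [sqrt_derivable sqrt_derive] := is_derive1_sqrt y_gt0.
have sqrt_diff : differentiable (@Num.sqrt R) y by apply/derivable1_diffP.
by apply: DiffDef => //; rewrite diff1E // derive1E sqrt_derive.
Qed.

Lemma is_diff_sqnorm (xi : 'rV[R]_d) :
  is_diff xi (@sqnorm R d) (fun h => 2 * (h *m xi^T) 0 0).
Proof.
have -> : @sqnorm R d = \sum_i (fun z : 'rV[R]_d => z 0 i) ^+ 2.
  by apply/funext => z; rewrite /sqnorm fct_sumE.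
have squares_diff i := is_diffX 1 (is_diff_coord 0 i xi).
apply: (is_diff_eq (is_diff_sum _ _ _ squares_diff)).
apply/funext => h; rewrite fct_sumE !mxE mulr_sumr; apply: eq_bigr => i _ /=.
by rewrite !fctE expr1 mxE [h 0 i * _]mulrC mulrA.
Qed.

Lemma is_diff_sigma0 {xi : 'rV[R]_d} : 0 < 1 - sqnorm xi ->
  is_diff xi sigma0 (fun h => - (h *m xi^T) 0 0 / sigma0 xi).
Proof.
move=> q_gt0; have s_neq0 : sigma0 xi != 0 by rewrite sqrtr_eq0 -ltNge.
have -> : sigma0 = Num.sqrt \o (cst 1 - @sqnorm R d) by [].
have q_diff := is_diffB (is_diff_cst (1 : R) xi) (is_diff_sqnorm xi).
apply: (is_diff_eq (is_diff_comp q_diff (is_diff_sqrt q_gt0))).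
apply/funext => h; rewrite !fctE sub0r -/(sigma0 xi).
by field; rewrite s_neq0.
Qed.

End sigma0.

Section block_det.
Context {R : fieldType}.

Lemma det_add_rank1 {d} (D : 'M[R]_d) (u : 'cV_d) (b : 'rV_d) : D \in unitmx ->
  \det (D + u *m b) = \det D * (1 + (b *m invmx D *m u) 0 0).
Proof.
move=> D_unit.
pose M := block_mx (1%:M : 'M[R]_1) b (- u) D.
have M_lower : M = block_mx 1%:M 0 (- u) 1%:M *m block_mx 1%:M b 0 (D + u *m b).
  rewrite mulmx_block !mul1mx !mul0mx !mulmx1 !addr0.
  by rewrite mulNmx addrC addrK.
have M_upper : M = block_mx (1%:M + b *m invmx D *m u) b 0 D
                   *m block_mx 1%:M 0 (- (invmx D *m u)) 1%:M.
  rewrite mulmx_block !mulmx1 !mulmx0 !add0r.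
  by rewrite !mulmxN (mulKVmx D_unit) mulmxA addrK.
have := congr1 determinant M_upper.
rewrite M_lower !det_mulmx !det_ublock !det_lblock !det1 !mul1r !mulr1 => ->.
by rewrite det_mx11 mulrC !mxE.
Qed.

Lemma invmx00E {n} (G : 'M[R]_(1 + n)) : G \in unitmx ->
  invmx G 0 0 = \det (drsubmx G) / \det G.
Proof.
move=> G_unit; rewrite /invmx G_unit !mxE /cofactor expr0 mul1r mulrC.
congr (\det _ / _); apply/matrixP => i j; rewrite !mxE.
by congr (G _ _); apply: val_inj.
Qed.

End block_det.

Section gmap.
Context {R : realType} {d : nat}.
Context (G : 'M[R]_(1 + d)).

Lemma gmapE :
  gmap G = (fun xi => sigma0 xi *: ursubmx G) + (fun xi => xi *m drsubmx G).
Proof.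
apply/funext => xi; rewrite /gmap /proj /sigma -{1}(submxK G) mul_row_block.
by rewrite row_mxKr mul_scalar_mx.
Qed.

Lemma is_diff_gmap {xi : 'rV[R]_d} : 0 < 1 - sqnorm xi ->
  is_diff xi (gmap G)
    (fun h => (- (h *m xi^T) 0 0 / sigma0 xi) *: ursubmx G + h *m drsubmx G).
Proof.
move=> q_gt0; rewrite gmapE.
have sigma0_diff := is_diffZl _ _ (ursubmx G) _ (is_diff_sigma0 q_gt0).
exact: (is_diff_eq (is_diffD sigma0_diff (is_diff_mulmxr (drsubmx G) xi))).
Qed.

Lemma jacobian_gmap {xi : 'rV[R]_d} : 0 < 1 - sqnorm xi ->
  'J (gmap G) xi = drsubmx G - (sigma0 xi)^-1 *: xi^T *m ursubmx G.
Proof.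
move=> q_gt0; have gmap_diff := is_diff_gmap q_gt0.
apply/row_matrixP => i; rewrite !rowE mul_rV_lin1 diff_val mulmxBr addrC mulmxA.
rewrite -scalemxAr -scalemxAl [in RHS](mx11_scalar (_ *m xi^T)) mul_scalar_mx.
by rewrite scalerA -scaleNr mulNr [_^-1 * _]mulrC.
Qed.

Lemma jacobian_gmap0 : 'J (gmap G) 0 = drsubmx G.
Proof.
by rewrite jacobian_gmap ?sqnorm0 ?subr0 // trmx0 scaler0 mul0mx subr0.
Qed.

Lemma det_jacobian_gmap {xi : 'rV[R]_d} :
  0 < 1 - sqnorm xi -> drsubmx G \in unitmx ->
  \det ('J (gmap G) xi) =
  \det (drsubmx G) *
    (1 - (xi *m (ursubmx G *m invmx (drsubmx G))^T) 0 0 / sigma0 xi).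
Proof.
move=> q_gt0 D_unit; rewrite jacobian_gmap // -mulNmx det_add_rank1 //.
rewrite mulmxN -scalemxAr -scaleNr [in LHS]mxE.
rewrite -[xi in RHS]trmxK -trmx_mul [in RHS]mxE.
by rewrite trmxK mulNr [_^-1 * _]mulrC.
Qed.

Lemma gmap_nondegenerate_near0 : \det (drsubmx G) != 0 ->
  \forall xi \near (0 : 'rV[R]_d),
    differentiable (gmap G) xi /\ \det ('J (gmap G) xi) != 0.
Proof.
move=> detD_neq0; have D_unit : drsubmx G \in unitmx by rewrite unitmxE unitfE.
pose w (xi : 'rV[R]_d) : R := (xi *m (ursubmx G *m invmx (drsubmx G))^T) 0 0.
have q0_gt0 : 0 < 1 - sqnorm (0 : 'rV[R]_d) by rewrite sqnorm0 subr0.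
have q_near0 : \forall xi \near (0 : 'rV[R]_d), 0 < 1 - sqnorm xi.
  exact: is_diff_near_gt (is_diffB (is_diff_cst (1 : R) 0) (is_diff_sqnorm 0))
    q0_gt0.
have w_near0 : \forall xi \near (0 : 'rV[R]_d), 0 < sigma0 xi - w xi.
  have w_diff := is_diff_comp
    (is_diff_mulmxr (ursubmx G *m invmx (drsubmx G))^T 0) (is_diff_coord 0 0 _).
  apply: is_diff_near_gt (is_diffB (is_diff_sigma0 q0_gt0) w_diff) _.
  by rewrite !fctE sigma0_0 mul0mx mxE subr0.
near=> xi.
have q_gt0 : 0 < 1 - sqnorm xi by near: xi.
have s_gt0 : 0 < sigma0 xi by rewrite sqrtr_gt0.
split; first by have [] := is_diff_gmap q_gt0.
have w_lt1 : w xi / sigma0 xi < 1.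
  by rewrite ltr_pdivrMr // mul1r -subr_gt0; near: xi.
rewrite det_jacobian_gmap // mulf_neq0 //.
by rewrite subr_eq0 eq_sym lt_eqF.
Unshelve. all: by end_near.
Qed.

End gmap.

Theorem lemma5p4 (R : realType) (n : nat) (G : 'M[R]_(1 + n.+1)) :
  G \in unitmx ->
  ((\forall xi \near (0 : 'rV[R]_n.+1),
      differentiable (gmap G) xi /\ \det ('J (gmap G) xi) != 0)
   <-> invmx G ord0 ord0 != 0).
Proof.
move=> G_unit; have detG_neq0 : \det G != 0 by rewrite -unitfE -unitmxE.
rewrite invmx00E // mulf_eq0 invr_eq0 (negbTE detG_neq0) orbF.
split=> [/nbhs_singleton [_]|]; first by rewrite jacobian_gmap0.
exact: gmap_nondegenerate_near0.
Qed.
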